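(* If $X,Y$ are metric spaces with $|X|,|Y|\le2$, then $d_{\mathrm{GH}}(X,Y)=\widehat{d}_{\mathrm{GH}}(X,Y)$.
   Context: For $f:X\to Y$, $\operatorname{dis}(f)=\sup_{x,x'}|d_X(x,x')-d_Y(f(x),f(x'))|$; $\operatorname{codis}(f,g)=\sup_{x,y}|d_X(x,g(y))-d_Y(f(x),y)|$. $d_{\mathrm{GH}}$ is the Gromov--Hausdorff distance, equal to $\frac12\inf_{f,g}\max\{\operatorname{dis}(f),\operatorname{dis}(g),\operatorname{codis}(f,g)\}$; $\widehat{d}_{\mathrm{GH}}(X,Y)=\frac12\max\{\inf_{f:X\to Y}\operatorname{dis}(f),\inf_{g:Y\to X}\operatorname{dis}(g)\}$. *)

From HB Require Import structures.
From mathcomp Require Import all_boot all_order all_algebra.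
From mathcomp Require Import all_classical all_reals.
Set Implicit Arguments. Unset Strict Implicit. Unset Printing Implicit Defensive.
Import Order.TTheory GRing.Theory Num.Theory.
Local Open Scope ring_scope.
Local Open Scope classical_set_scope.

Section GH.
Variable R : realType.

Definition is_metric (X : Type) (d : X -> X -> R) : Prop :=
  (forall x y, d x y = 0 <-> x = y) /\
  (forall x y, d x y = d y x) /\
  (forall x y z, d x z <= d x y + d y z).

Definition dis (X Y : Type) (dX : X -> X -> R) (dY : Y -> Y -> R) (f : X -> Y) : R :=
  sup (range (fun p : X * X => `|dX p.1 p.2 - dY (f p.1) (f p.2)|)).

Definition codis (X Y : Type) (dX : X -> X -> R) (dY : Y -> Y -> R)
  (f : X -> Y) (g : Y -> X) : R :=
  sup (range (fun p : X * Y => `|dX p.1 (g p.2) - dY (f p.1) p.2|)).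

Definition dGH (X Y : Type) (dX : X -> X -> R) (dY : Y -> Y -> R) : R :=
  2^-1 * inf (range (fun fg : (X -> Y) * (Y -> X) =>
     Num.max (dis dX dY fg.1) (Num.max (dis dY dX fg.2) (codis dX dY fg.1 fg.2)))).

Definition dGH_hat (X Y : Type) (dX : X -> X -> R) (dY : Y -> Y -> R) : R :=
  2^-1 * Num.max (inf (range (fun f : X -> Y => dis dX dY f)))
                 (inf (range (fun g : Y -> X => dis dY dX g))).
End GH.

From HB Require Import structures.
From mathcomp Require Import all_boot all_order all_algebra.
From mathcomp Require Import all_classical all_reals.
From mathcomp Require Import lra.
Set Implicit Arguments. Unset Strict Implicit. Unset Printing Implicit Defensive.
Import Order.TTheory GRing.Theory Num.Theory.
Local Open Scope ring_scope.

(* Since #|Y| <= 2, a map f : X -> Y is either onto or constant.  If it is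
   onto, a right inverse h of f gives dis h <= dis f and codis (f, h) <= dis f;
   if it is constant, dis f >= diam X.  The same holds for g : Y -> X.  So any
   pair (f, g) can be replaced by a pair whose max {dis, dis, codis} is at most
   max {dis f, dis g}: when f and g are both constant, (f, g) itself works,
   since |dX x (g y) - dY (f x) y| <= max (diam X, diam Y).  Hence the infimum
   over pairs is at most the max of the two infima; the converse inequality
   holds for all spaces. *)

Lemma le_sup_range_fin {R : realType} {T : finType} (F : T -> R) t :
  F t <= sup (range F).
Proof.
apply: sup_upper_bound; last by exists t.
split; first by exists (F t), t.
exists (\sum_(s : T) `|F s|) => _ [s _ <-].
rewrite (bigD1 s) //=; apply: le_trans (ler_norm _) _.
by rewrite lerDl sumr_ge0.
Qed.

Lemma sup_range_fin_le {R : realType} {T : finType} (F : T -> R) (c : R) (t0 : T) :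
  (forall t, F t <= c) -> sup (range F) <= c.
Proof. by move=> Fc; apply: ge_sup; [exists (F t0), t0 | move=> _ [t _ <-]]. Qed.

Lemma card_le2_eq {T : finType} {a b : T} (z : T) :
  (#|T| <= 2)%N -> a != b -> z = a \/ z = b.
Proof.
move=> card_le2 ab; case: (eqVneq z a) => [|za]; first by left.
case: (eqVneq z b) => [|zb]; first by right.
suff : (2 < #|T|)%N by rewrite ltnNge card_le2.
by apply/card_gt2P; exists a, b, z; rewrite ab (eq_sym b) zb za.
Qed.

Lemma surjective_or_constant (T U : finType) (f : T -> U) :
  (#|U| <= 2)%N -> (exists g, cancel g f) \/ (forall t t', f t = f t').
Proof.
move=> card_le2; case: (pselect (forall t t', f t = f t')) => [|nconst]; first by right.
left; move/existsNP: nconst => [t /existsNP [t' /eqP ft]].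
exists (fun u => if u == f t then t else t') => u.
case: eqP => [->|/eqP ut] //.
by case: (card_le2_eq u card_le2 ft) => // uft; rewrite uft eqxx in ut.
Qed.

Section Metric.
Context {R : realType} {X : Type} {d : X -> X -> R}.
Hypothesis metric_d : is_metric d.

Lemma metric_refl x : d x x = 0.
Proof. by apply/(metric_d.1 x x). Qed.

Lemma metric_ge0 x y : 0 <= d x y.
Proof.
have := metric_d.2.2 x y x; rewrite metric_refl (metric_d.2.1 y x).
by rewrite -mulr2n pmulrn_lge0.
Qed.

End Metric.

Section Distortion.
Context {R : realType} {X Y : finType} {dX : X -> X -> R} {dY : Y -> Y -> R}.

Lemma dis_ge (f : X -> Y) x x' : `|dX x x' - dY (f x) (f x')| <= dis dX dY f.
Proof.
exact: (le_sup_range_fin (fun p : X * X => `|dX p.1 p.2 - dY (f p.1) (f p.2)|) (x, x')).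
Qed.

Lemma dis_ge0 (f : X -> Y) (x : X) : 0 <= dis dX dY f.
Proof. exact: le_trans (normr_ge0 _) (dis_ge f x x). Qed.

Lemma dis_le (f : X -> Y) (c : R) (x0 : X) :
  (forall x x', `|dX x x' - dY (f x) (f x')| <= c) -> dis dX dY f <= c.
Proof. by move=> le_c; apply: (sup_range_fin_le (x0, x0)) => -[x x']; apply: le_c. Qed.

Lemma codis_le (f : X -> Y) (g : Y -> X) (c : R) (x0 : X) (y0 : Y) :
  (forall x y, `|dX x (g y) - dY (f x) y| <= c) -> codis dX dY f g <= c.
Proof. by move=> le_c; apply: (sup_range_fin_le (x0, y0)) => -[x y]; apply: le_c. Qed.

End Distortion.

Section DistortionBounds.
Context {R : realType} {X Y : finType} {dX : X -> X -> R} {dY : Y -> Y -> R}.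

Lemma inf_dis_le (x0 : X) (f : X -> Y) : inf (range (dis dX dY)) <= dis dX dY f.
Proof. by apply: ge_inf (imageT _ f); exists 0 => _ [h _ <-]; apply: dis_ge0 h x0. Qed.

Lemma dis_right_inverse_le (f : X -> Y) (g : Y -> X) (y0 : Y) :
  cancel g f -> dis dY dX g <= dis dX dY f.
Proof.
by move=> gK; apply: (dis_le y0) => y y'; rewrite -{1}[y]gK -{1}[y']gK distrC dis_ge.
Qed.

Lemma codis_right_inverse_le (f : X -> Y) (g : Y -> X) (x0 : X) (y0 : Y) :
  cancel g f -> codis dX dY f g <= dis dX dY f.
Proof. by move=> gK; apply: (codis_le x0 y0) => x y; rewrite -{2}[y]gK dis_ge. Qed.

Lemma codis_left_inverse_le (f : X -> Y) (g : Y -> X) (x0 : X) (y0 : Y) :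
  cancel f g -> codis dX dY f g <= dis dY dX g.
Proof. by move=> fK; apply: (codis_le x0 y0) => x y; rewrite -{1}[x]fK distrC dis_ge. Qed.

Hypotheses (metric_dX : is_metric dX) (metric_dY : is_metric dY).

Lemma dis_constant_ge (f : X -> Y) x x' :
  (forall x x', f x = f x') -> dX x x' <= dis dX dY f.
Proof.
move=> fconst; apply: le_trans (dis_ge f x x').
by rewrite (fconst x x') metric_refl // subr0 ger0_norm // metric_ge0.
Qed.

Lemma codis_le_max_diam (f : X -> Y) (g : Y -> X) (a b : R) (x0 : X) (y0 : Y) :
  (forall x x', dX x x' <= a) -> (forall y y', dY y y' <= b) ->
  codis dX dY f g <= Num.max a b.
Proof.
move=> diamX diamY; apply: (codis_le x0 y0) => x y.
have := diamX x (g y); have := diamY (f x) y.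
have := metric_ge0 metric_dX x (g y); have := metric_ge0 metric_dY (f x) y.
by rewrite maxEle; case: (leP a b) => *; rewrite ler_norml; apply/andP; split; lra.
Qed.

End DistortionBounds.

Definition dis_codis {R : realType} {X Y : Type} (dX : X -> X -> R) (dY : Y -> Y -> R)
  (fg : (X -> Y) * (Y -> X)) : R :=
  Num.max (dis dX dY fg.1) (Num.max (dis dY dX fg.2) (codis dX dY fg.1 fg.2)).

Section InfDisCodis.
Context {R : realType} {X Y : finType} {dX : X -> X -> R} {dY : Y -> Y -> R}.
Variables (x0 : X) (y0 : Y).

Lemma max_inf_dis_le_inf_dis_codis :
  Num.max (inf (range (dis dX dY))) (inf (range (dis dY dX)))
  <= inf (range (dis_codis dX dY)).
Proof.
apply: lb_le_inf => [|_ [[f g] _ <-]].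
  exact: ex_intro _ _ (imageT _ (fun=> y0, fun=> x0)).
rewrite ge_max /dis_codis /=; apply/andP; split.
  by apply: le_trans (inf_dis_le x0 f) _; rewrite le_max lexx.
by apply: le_trans (inf_dis_le y0 g) _; rewrite !le_max lexx orbT.
Qed.

Lemma inf_dis_codis_le (fg : (X -> Y) * (Y -> X)) :
  inf (range (dis_codis dX dY)) <= dis_codis dX dY fg.
Proof.
apply: ge_inf (imageT _ fg); exists 0 => _ [[f g] _ <-].
by rewrite /dis_codis le_max (dis_ge0 _ x0).
Qed.

Hypotheses (metric_dX : is_metric dX) (metric_dY : is_metric dY).
Hypotheses (card_X : (#|X| <= 2)%N) (card_Y : (#|Y| <= 2)%N).

Lemma exists_dis_codis_le (f : X -> Y) (g : Y -> X) :
  exists fg, dis_codis dX dY fg <= Num.max (dis dX dY f) (dis dY dX g).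
Proof.
have [[h hK]|fconst] := surjective_or_constant f card_Y.
  exists (f, h); apply: le_trans (_ : dis dX dY f <= _); last by rewrite le_max lexx.
  by rewrite !ge_max lexx (dis_right_inverse_le y0 hK) (codis_right_inverse_le x0 y0 hK).
have [[h hK]|gconst] := surjective_or_constant g card_X.
  exists (h, g); apply: le_trans (_ : dis dY dX g <= _); last by rewrite le_max lexx orbT.
  by rewrite !ge_max lexx (dis_right_inverse_le x0 hK) (codis_left_inverse_le x0 y0 hK).
exists (f, g); have codis_le : codis dX dY f g <= Num.max (dis dX dY f) (dis dY dX g).
  apply: (codis_le_max_diam metric_dX metric_dY f g x0 y0) => *;
  exact: dis_constant_ge.
by rewrite /dis_codis /= !ge_max codis_le !le_max !lexx orbT.
Qed.

Lemma inf_dis_codis_le_max_inf_dis :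
  inf (range (dis_codis dX dY))
  <= Num.max (inf (range (dis dX dY))) (inf (range (dis dY dX))).
Proof.
rewrite leNgt gt_max; apply/negP => /andP[].
move=> /(inf_lt (ex_intro _ _ (imageT _ (fun=> y0)))) [_ [f _ <-] ltf].
move=> /(inf_lt (ex_intro _ _ (imageT _ (fun=> x0)))) [_ [g _ <-] ltg].
have [fg le_fg] := exists_dis_codis_le f g.
have := le_trans (inf_dis_codis_le fg) le_fg.
by rewrite leNgt gt_max ltf ltg.
Qed.

End InfDisCodis.

Theorem claim4 (R : realType) (X Y : finType)
  (dX : X -> X -> R) (dY : Y -> Y -> R) :
  is_metric dX -> is_metric dY ->
  (0 < #|X| <= 2)%N -> (0 < #|Y| <= 2)%N ->
  dGH dX dY = dGH_hat dX dY.
Proof.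
move=> metric_dX metric_dY /andP[/card_gt0P[x0 _] card_X] /andP[/card_gt0P[y0 _] card_Y].
rewrite /dGH /dGH_hat -/(dis_codis dX dY); congr (_ * _); apply/le_anti/andP; split.
  exact: inf_dis_codis_le_max_inf_dis.
exact: max_inf_dis_le_inf_dis_codis.
Qed.
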